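(* Let $\mathcal{T}=(\mathbb{K}_i,\phi_i)$ be a tower with $\mathbb{K}_0=\emptyset$ whose maps are elementary inclusions or elementary contractions, with width $\omega=\max_i|\mathbb{K}_i|$. Run the streaming reduction algorithm described below on the stream obtained from the active small coning filtration of $\mathcal{T}$. Then at every moment during the algorithm, the number of columns stored in $M$ is at most $2\omega$.
   Context: Elementary inclusion: $\mathbb{K}_{i+1}=\mathbb{K}_i\cup\{\sigma\}$; elementary contraction of distinct vertices $u,v$: one of them, say $v$, disappears, $\phi_i(u)=\phi_i(v)=u$, identity elsewhere, $\mathbb{K}_{i+1}=\phi_i(\mathbb{K}_i)$. Active small coning construction: $\hat{\mathbb{K}}_0=\emptyset$; vertices flagged active/inactive (simplex active iff all its vertices are); inclusion of $\sigma$ adds $\sigma$ (new vertices active); contraction of $u,v$ adds $\{\{v\}\cup\tau:\tau\in\mathrm{Act}\overline{\mathrm{St}}(u,\hat{\mathbb{K}}_i)\}$ and marks $u$ inactive if $|\mathrm{Act}\overline{\mathrm{St}}(u,\hat{\mathbb{K}}_i)|\le|\mathrm{Act}\overline{\mathrm{St}}(v,\hat{\mathbb{K}}_i)|$ (symmetric otherwise), $\mathrm{Act}\overline{\mathrm{St}}(w,\hat{\mathbb{K}}_i)$ being the active simplices of $\hat{\mathbb{K}}_i$ in the closed star of $w$; the active simplices of $\hat{\mathbb{K}}_i$ form (a copy of) $\mathbb{K}_i$. Input stream: for $i=0,1,\dots$, elements (ADDITION, $\sigma$, facets of $\sigma$) for the simplices of $\hat{\mathbb{K}}_{i+1}\setminus\hat{\mathbb{K}}_i$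 in increasing dimension, and (INACTIVE, $\sigma$) for every simplex becoming inactive at step $i$; simplices indexed by stream position. Algorithm over $\mathbb{Z}_2$ with matrix $M$ stored as a dictionary of columns (sets of row indices; pivot = largest row index); a simplex is negative if its reduced column is nonzero. reduce_column($j$): delete row indices of column $j$ that are inactive and negative; then while column $j$ is nonzero and its pivot equals the pivot of another column $k<j$ in $M$, add column $k$ to column $j$. remove_row($\ell$): with $j$ the column of pivot $\ell$, add column $j$ to every other column of $M$ with an entry in row $\ell$, then delete column $j$ from $M$. Main loop: on ADDITION of $j$, insert its column and call reduce_column($j$); delete it if zero, otherwise report $(\ell,j)$ for its pivot $\ell$ and call remove_row($\ell$) if $\ell$ is inactive. On (INACTIVE, $\ell$), call remove_row($\ell$) if $\ell$ is a pivot of a column in $M$. *)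

From mathcomp Require Import all_boot finmap.
Set Implicit Arguments.
Unset Strict Implicit.
Unset Printing Implicit Defensive.
Local Open Scope fset_scope.
Local Open Scope fmap_scope.

Definition tsimplex := {fset nat}.
Definition tcomplex := {fset tsimplex}.

(* Elementary maps: [Incl s] is the elementary inclusion of s;
   [Contr u v] is the elementary contraction of u and v in which v
   disappears: phi(u) = phi(v) = u, identity elsewhere. *)
Inductive top := Incl of tsimplex | Contr of nat & nat.

Definition is_vertex (K : tcomplex) (x : nat) : bool := [fset x] \in K.

Definition contr_map (u v : nat) (x : nat) : nat := if x == v then u else x.

Definition contr_simplex (u v : nat) (t : tsimplex) : tsimplex :=
  [fset contr_map u v x | x in t].

Definition op_valid (K : tcomplex) (o : top) : Prop :=
  match o with
  | Incl s => s != fset0 /\ s \notin K /\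
              (forall t : tsimplex, t `<` s -> t != fset0 -> t \in K)
  | Contr u v => u != v /\ is_vertex K u /\ is_vertex K v
  end.

(* Active small coning.  Vertices of hat K are pairs (x, i): the tower  *)
(* vertex x created at step i (this guarantees fresh names).            *)
Definition hvert := (nat * nat)%type.
Definition hsimplex := {fset hvert}.

Record cstate := CState {
  cK   : tcomplex;
  chat : {fset hsimplex};
  cact : {fset hvert};
  crho : nat -> hvert          (* tower vertex |-> its active copy in hat K_i *)
}.

Definition init_cstate : cstate :=
  CState fset0 fset0 fset0 (fun x => (x, 0)).

Definition active (A : {fset hvert}) (s : hsimplex) : bool := s `<=` A.

Definition act_star (H : {fset hsimplex}) (A : {fset hvert}) (w : hvert)
  : {fset hsimplex} :=
  [fset t in H | active A t &&
     has (fun s : hsimplex => (w \in s) && (t `<=` s)) (enum_fset H)].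

Definition cstep (i : nat) (st : cstate) (o : top) : cstate :=
  let K := cK st in let H := chat st in let A := cact st in
  let rho := crho st in
  match o with
  | Incl s =>
      let rho' := fun x => if (x \in s) && ~~ is_vertex K x then (x, i)
                           else rho x in
      let newv := [fset (x, i) | x in s & ~~ is_vertex K x] in
      CState (K `|` [fset s])
             (H `|` [fset [fset rho' x | x in s]])
             (A `|` newv) rho'
  | Contr u v =>
      let a := rho u in let b := rho v in
      let Sa := act_star H A a in let Sb := act_star H A b in
      let K' := [fset contr_simplex u v t | t in K] in
      if #|` Sa| <= #|` Sb| then
        CState K' (H `|` [fset b |` t | t in Sa]) (A `\ a)
               (fun x => if x == u then b else rho x)
      else
        CState K' (H `|` [fset a |` t | t in Sb]) (A `\ b)
               (fun x => if x == u then a else rho x)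
  end.

Fixpoint states_from (i : nat) (st : cstate) (ops : seq top) : seq cstate :=
  st :: match ops with
        | [::] => [::]
        | o :: os => states_from i.+1 (cstep i st o) os
        end.

Definition states (ops : seq top) : seq cstate := states_from 0 init_cstate ops.

Definition state_at (ops : seq top) (i : nat) : cstate :=
  nth init_cstate (states ops) i.

Definition valid_tower (ops : seq top) : Prop :=
  forall i, i < size ops -> op_valid (cK (state_at ops i)) (nth (Incl fset0) ops i).

Definition width (ops : seq top) : nat :=
  \max_(i < (size ops).+1) #|` cK (state_at ops i)|.

Definition newly_inactive (S S' : cstate) : {fset hsimplex} :=
  [fset t in chat S' | ~~ active (cact S') t &&
                       ((t \notin chat S) || active (cact S) t)].

(* bs = list of per-step blocks (added simplices in stream order,
   simplices flagged INACTIVE in stream order). *)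
Definition coning_blocks (ops : seq top) (bs : seq (seq hsimplex * seq hsimplex))
  : Prop :=
  size bs = size ops /\
  forall i, i < size ops ->
    let S := state_at ops i in let S' := state_at ops i.+1 in
    let ab := nth ([::], [::]) bs i in
    [/\ perm_eq ab.1 (enum_fset (chat S' `\` chat S)),
        sorted (fun s t : hsimplex => #|` s| <= #|` t|) ab.1 &
        perm_eq ab.2 (enum_fset (newly_inactive S S'))].

Inductive elem := ADDITION of nat & seq nat | INACTIVE of nat.

Definition facets (s : hsimplex) : seq hsimplex :=
  if 1 < #|` s| then [seq s `\ x | x <- enum_fset s] else [::].

(* Simplices are indexed by their position among the ADDITION elements. *)
Definition to_stream (bs : seq (seq hsimplex * seq hsimplex)) : seq elem :=
  let adds := flatten (map fst bs) in
  let ix := fun s : hsimplex => index s adds in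
  flatten [seq [seq ADDITION (ix s) (map ix (facets s)) | s <- p.1] ++
               [seq INACTIVE (ix s) | s <- p.2] | p <- bs].

(* A column is a set of row indices; M a finite map of columns.         *)
Definition column := {fset nat}.
Definition matrix := {fmap nat -> column}.

Definition addcol (c d : column) : column := (c `\` d) `|` (d `\` c).

Definition pivot (c : column) : option nat :=
  if c == fset0 then None else Some (\max_(x <- enum_fset c) x).

Definition lookup (M : matrix) (k : nat) : column := odflt fset0 M.[? k].

Record astate := AState { aM : matrix; ainact : seq nat; aneg : seq nat }.

(* Returns the successive
   matrices (the pivot strictly decreases, so fuel = pivot+1 suffices). *)
Fixpoint red_loop (fuel : nat) (M : matrix) (j : nat) : seq matrix :=
  match fuel with
  | 0 => [::]
  | f.+1 =>
    match pivot (lookup M j) with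
    | None => [::]
    | Some p =>
      match [seq k <- enum_fset (domf M) | (k < j) && (pivot (lookup M k) == Some p)] with
      | [::] => [::]
      | k :: _ => let M' := M.[j <- addcol (lookup M j) (lookup M k)] in
                  M' :: red_loop f M' j
      end
    end
  end.

Definition reduce_column (st : astate) (j : nat) : seq matrix :=
  let M := aM st in
  let c0 := [fset x in lookup M j | ~~ ((x \in ainact st) && (x \in aneg st))] in
  let M1 := M.[j <- c0] in
  M1 :: red_loop (\max_(x <- enum_fset c0) x).+2 M1 j.

Definition remove_row (M : matrix) (l : nat) : seq matrix :=
  match [seq k <- enum_fset (domf M) | pivot (lookup M k) == Some l] with
  | [::] => [::]
  | j :: _ =>
    let cj := lookup M j in
    let others := [seq k <- enum_fset (domf M) | (k != j) && (l \in lookup M k)] in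
    let tr := scanl (fun N k => N.[k <- addcol (lookup N k) cj]) M others in
    let Mf := last M tr in
    rcons tr Mf.[~ j]
  end.

Definition process (st : astate) (e : elem) : seq matrix * astate :=
  match e with
  | ADDITION j fs =>
      let M1 := (aM st).[j <- [fset x | x in fs]] in
      let st1 := AState M1 (ainact st) (aneg st) in
      let tr2 := reduce_column st1 j in
      let M2 := last M1 tr2 in
      match pivot (lookup M2 j) with
      | None => let M3 := M2.[~ j] in
                (M1 :: rcons tr2 M3, AState M3 (ainact st) (aneg st))
      | Some l =>
          let neg' := j :: aneg st in
          if l \in ainact st then
            let tr3 := remove_row M2 l in
            (M1 :: tr2 ++ tr3, AState (last M2 tr3) (ainact st) neg')
          else (M1 :: tr2, AState M2 (ainact st) neg')
      end
  | INACTIVE l =>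
      let inact' := l :: ainact st in
      let M := aM st in
      if has (fun k => pivot (lookup M k) == Some l) (enum_fset (domf M)) then
        let tr := remove_row M l in
        (tr, AState (last M tr) inact' (aneg st))
      else ([::], AState M inact' (aneg st))
  end.

Fixpoint run_from (st : astate) (s : seq elem) : seq matrix :=
  aM st :: match s with
           | [::] => [::]
           | e :: s' => let (tr, st') := process st e in tr ++ run_from st' s'
           end.

Definition alg_trace (s : seq elem) : seq matrix :=
  run_from (AState [fmap] [::] [::]) s.

Definition ncols (M : matrix) : nat := #|` domf M|.

From mathcomp Require Import all_boot finmap.
Set Implicit Arguments.
Unset Strict Implicit.
Unset Printing Implicit Defensive.
Local Open Scope fset_scope.

(* Two invariants are maintained along the stream.  On the algorithm side,
   the stored columns have pairwise distinct nonzero pivots and no stored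
   pivot is an inactive simplex: a pivot that is, or becomes, inactive is
   eliminated by remove_row at once.  On the coning side, the active simplices
   of hat K_i are exactly the images of the simplices of K_i.  Hence, when the
   block of step i starts, the columns inject through their pivots into the
   active simplices of hat K_i, so there are at most |K_i| <= omega of them.
   Within the block the number of columns grows at most by the number of
   simplices added, |hat K_(i+1) \ hat K_i|, which is 1 for an inclusion and
   at most the size of an active star, hence at most |K_i|, for a contraction.
   Altogether at most 2 omega columns are ever stored. *)

(** * Streaming reduction *)

Section Reduction.
Local Open Scope fmap_scope.

Lemma lookup_set (M : matrix) k c k' :
  lookup M.[k <- c] k' = if k' == k then c else lookup M k'.
Proof. by rewrite /lookup fnd_set; case: eqP. Qed.

Lemma lookup_rem (M : matrix) k k' :
  lookup M.[~ k] k' = if k' == k then fset0 else lookup M k'.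
Proof. by rewrite /lookup fnd_rem1; case: eqP. Qed.

Lemma fset1U_id (K : choiceType) (A : {fset K}) k : k \in A -> k |` A = A.
Proof. by move=> kA; apply/fsetUidPr; rewrite fsub1set. Qed.

Lemma all_last (T : Type) (P : pred T) x s : P x -> all P s -> P (last x s).
Proof. by elim: s x => //= y s IH x _ /andP [/IH]. Qed.

Lemma bigmax_seq_mem (s : seq nat) : s != [::] -> \max_(x <- s) x \in s.
Proof.
elim: s => // a [|b s] IH _; first by rewrite big_seq1 inE.
rewrite big_cons inE /maxn; have := IH isT.
by case: ltnP => _ m; rewrite ?m ?orbT ?eqxx.
Qed.

Lemma pivotP (c : column) p :
  pivot c = Some p <-> p \in c /\ {in c, forall x, x <= p}.
Proof.
rewrite /pivot; split.
  case: eqP => // /eqP c0 [<-]; split=> [|x xc]; last exact: leq_bigmax_seq.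
  apply: bigmax_seq_mem; apply: contra c0 => /eqP c0.
  by apply/eqP/fsetP => x; rewrite inE -[x \in c]/(x \in enum_fset c) c0.
move=> [pc pm]; case: eqP => [c0|_]; first by rewrite c0 inE in pc.
congr Some; apply/eqP; rewrite eqn_leq leq_bigmax_seq // andbT.
by apply/bigmax_leqP_seq => x xc _; apply: pm.
Qed.

Lemma pivot_None (c : column) : pivot c = None <-> c = fset0.
Proof. by rewrite /pivot; case: eqP. Qed.

Lemma pivot_ub (c : column) x : x \in c -> exists2 p, pivot c = Some p & x <= p.
Proof.
move=> xc; case E: (pivot c) => [p|]; first by exists p => //; apply: (proj1 (pivotP _ _) E).2.
by move/pivot_None: E xc => ->; rewrite inE.
Qed.

Lemma in_addcol (c d : column) x : (x \in addcol c d) = (x \in c) (+) (x \in d).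
Proof. by rewrite /addcol !inE; case: (x \in c); case: (x \in d). Qed.

Lemma in_addcolW (c d : column) x : x \in addcol c d -> (x \in c) || (x \in d).
Proof. by rewrite in_addcol; case: (x \in c). Qed.

Lemma addcol_same_pivot (c d : column) p : pivot c = Some p -> pivot d = Some p ->
  {in addcol c d, forall x, x < p}.
Proof.
move=> /pivotP [pc pcm] /pivotP [pd pdm] x.
rewrite in_addcol ltn_neqAle.
case xc: (x \in c); case xd: (x \in d) => //= _.
  by rewrite pcm // andbT; apply: contraFN xd => /eqP ->.
by rewrite pdm // andbT; apply: contraFN xc => /eqP ->.
Qed.

Lemma pivot_addcol_lt (c d : column) p q : pivot c = Some p -> pivot d = Some q ->
  q < p -> pivot (addcol c d) = Some p.
Proof.
move=> /pivotP [pc pcm] /pivotP [qd qdm] qp; apply/pivotP; split.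
  by rewrite in_addcol pc; apply/negP => /qdm; rewrite leqNgt qp.
move=> x /in_addcolW /orP [/pcm //| /qdm xq]; exact: leq_trans xq (ltnW qp).
Qed.

Definition rows_below (B : nat) (M : matrix) := forall k, {in lookup M k, forall x, x < B}.

Definition reduced_at (M : matrix) (j : nat) :=
  forall p, pivot (lookup M j) = Some p ->
  forall k, k \in domf M -> k < j -> pivot (lookup M k) != Some p.

Definition reduced (M : matrix) :=
  (forall k, k \in domf M -> pivot (lookup M k) != None) /\
  {in domf M &, injective (fun k => pivot (lookup M k))}.

Lemma rows_below_set B (M : matrix) j c :
  rows_below B M -> {in c, forall x, x < B} -> rows_below B M.[j <- c].
Proof. by move=> HM Hc k x; rewrite lookup_set; case: eqP => _; [apply: Hc|apply: HM]. Qed.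

Lemma rows_below_rem B (M : matrix) j : rows_below B M -> rows_below B M.[~ j].
Proof. by move=> HM k x; rewrite lookup_rem; case: eqP => _; [rewrite inE|apply: HM]. Qed.

Lemma rows_belowW B B' (M : matrix) : B <= B' -> rows_below B M -> rows_below B' M.
Proof. by move=> BB' HM k x /HM /leq_trans; apply. Qed.

Lemma reduced_sub (M M0 : matrix) :
  reduced M0 -> domf M `<=` domf M0 ->
  {in domf M, forall k, pivot (lookup M k) = pivot (lookup M0 k)} -> reduced M.
Proof.
move=> [nz0 inj0] /fsubsetP sub E; split=> [k kM|k1 k2 k1M k2M /=].
  by rewrite E //; apply/nz0/sub.
by rewrite !E //; apply: inj0; apply: sub.
Qed.

Lemma red_loopP fuel (M : matrix) j :
  j \in domf M -> (forall p, pivot (lookup M j) = Some p -> p < fuel) ->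
  let tr := red_loop fuel M j in
  [/\ all (fun N : matrix => domf N == domf M) tr,
      forall k, k != j -> lookup (last M tr) k = lookup M k,
      forall B, rows_below B M -> rows_below B (last M tr),
      domf (last M tr) = domf M &
      reduced_at (last M tr) j].
Proof.
elim: fuel M => [|f IH] M jM Hf /=; first by split=> // p /Hf.
case E: (pivot (lookup M j)) => [p|] /=; last by split=> // ?; rewrite E.
set ks := [seq k <- _ | _]; have memks k : (k \in ks) = _ := mem_filter _ k _.
case F: ks => [|k ks'] /=.
  split=> // q; rewrite E => -[<-] k kM kj; apply/negP => /eqP Ek.
  have : k \in ks by rewrite memks kj Ek eqxx.
  by rewrite F.
have /andP [/andP [kj /eqP Ek] kM] :
    (k < j) && (pivot (lookup M k) == Some p) && (k \in enum_fset (domf M)).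
  by rewrite -memks F inE eqxx.
set M1 := M.[j <- _].
have dM1 : domf M1 = domf M by rewrite dom_setf fset1U_id.
have Hf1 q : pivot (lookup M1 j) = Some q -> q < f.
  rewrite lookup_set eqxx => /pivotP [qc _].
  by apply: leq_trans (addcol_same_pivot E Ek qc) _; rewrite -ltnS Hf.
have jM1 : j \in domf M1 by rewrite dM1.
have [IH1 IH2 IH3 IH4 IH5] := IH M1 jM1 Hf1.
split=> //.
- by rewrite fset1U_id // eqxx -dM1.
- by move=> k' k'j; rewrite IH2 // lookup_set (negPf k'j).
- by move=> B HB; apply/IH3/rows_below_set => // x /in_addcolW /orP [] /HB.
- by rewrite IH4.
Qed.

Lemma scanl_addcolP (ks : seq nat) (M : matrix) c :
  uniq ks -> {subset ks <= domf M} ->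
  let tr := scanl (fun N k => N.[k <- addcol (lookup N k) c]) M ks in
  all (fun N : matrix => domf N == domf M) tr /\
  forall k, lookup (last M tr) k = if k \in ks then addcol (lookup M k) c else lookup M k.
Proof.
elim: ks M => [|k ks IH] M /=; first by split=> // k.
move=> /andP [kks uks] sub.
have kM : k \in domf M by apply: sub; rewrite inE eqxx.
set M1 := M.[k <- _].
have dM1 : domf M1 = domf M by rewrite dom_setf fset1U_id.
have sub1 : {subset ks <= domf M1} by move=> x xs; rewrite dM1; apply: sub; rewrite inE xs orbT.
have [H1 H2] := IH M1 uks sub1.
split; first by rewrite fset1U_id // eqxx -dM1.
move=> k'; rewrite H2 inE /M1 !lookup_set.
by case: eqP => [->|_] /=; [rewrite (negPf kks) | case: (k' \in ks)].
Qed.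

Lemma remove_rowP (M : matrix) l :
  reduced M -> (exists2 j, j \in domf M & pivot (lookup M j) = Some l) ->
  let tr := remove_row M l in
  [/\ all (fun N : matrix => domf N `<=` domf M) tr,
      exists j, [/\ j \in domf M, pivot (lookup M j) = Some l,
        domf (last M tr) = domf M `\ j &
        {in domf (last M tr), forall k, pivot (lookup (last M tr) k) = pivot (lookup M k)}] &
      forall B, rows_below B M -> rows_below B (last M tr)].
Proof.
move=> [nzM injM] [j1 j1M Ej1]; rewrite /remove_row.
set js := [seq k <- _ | _]; have memjs k : (k \in js) = _ := mem_filter _ k _.
case F: js => [|j ks].
  by have := memjs j1; rewrite F Ej1 eqxx j1M.
have /andP [/eqP Ej jM] : (pivot (lookup M j) == Some l) && (j \in enum_fset (domf M)).
  by rewrite -memjs F inE eqxx.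
set others := [seq k <- _ | _].
have uo : uniq others by apply/filter_uniq/fset_uniq.
have so : {subset others <= domf M} by move=> x; rewrite mem_filter => /andP [].
have [S1 S2] := scanl_addcolP (lookup M j) uo so.
set tr := scanl _ M others in S1 S2 *.
have dL : domf (last M tr) = domf M.
  by apply/eqP/(all_last (P := fun N : matrix => domf N == domf M)).
rewrite last_rcons; split.
- rewrite all_rcons domf_rem dL fsubDset fsubsetU ?fsubset_refl ?orbT //=.
  by apply: sub_all S1 => N /eqP ->.
- exists j; split=> //; first by rewrite domf_rem dL.
  move=> k kL; have /andP [kj kM] : (k != j) && (k \in domf M).
    by move: kL; rewrite domf_rem dL in_fsetD1.
  rewrite lookup_rem (negPf kj) S2; case: ifP => // ko.
  move: ko; rewrite mem_filter => /andP [/andP [_ lk] _].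
  have [p Ep lp] := pivot_ub lk.
  have lt : l < p.
    rewrite ltn_neqAle lp andbT; apply: contra kj => /eqP el.
    by apply/eqP/injM; rewrite //= Ep Ej el.
  by rewrite Ep (pivot_addcol_lt Ep Ej lt).
- move=> B HB; apply: rows_below_rem => k x; rewrite S2; case: ifP => _; last exact: HB.
  by move/in_addcolW => /orP [] /HB.
Qed.

Definition reduction_inv (N : nat) (st : astate) :=
  [/\ forall k, k \in domf (aM st) -> k < N,
      rows_below N (aM st),
      reduced (aM st) &
      forall k p, k \in domf (aM st) -> pivot (lookup (aM st) k) = Some p ->
        p \notin ainact st].

Lemma reduce_columnP N st fs : reduction_inv N st -> all (gtn N) fs ->
  let M1 := (aM st).[N <- [fset x | x in fs]] in
  let tr := reduce_column (AState M1 (ainact st) (aneg st)) N in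
  let M2 := last M1 tr in
  [/\ all (fun M : matrix => domf M == N |` domf (aM st)) tr,
      domf M2 = N |` domf (aM st),
      forall k, k != N -> lookup M2 k = lookup (aM st) k,
      rows_below N M2 & reduced_at M2 N].
Proof.
move=> [_ rowsM _ _] Hfs M1 tr M2.
set c0 := [fset x in lookup M1 N | ~~ ((x \in ainact st) && (x \in aneg st))].
set M1' := M1.[N <- c0].
have trE : tr = M1' :: red_loop (\max_(x <- enum_fset c0) x).+2 M1' N by [].
rewrite {}/M2 {}trE last_cons.
have dM1' : domf M1' = N |` domf (aM st) by rewrite dom_setf dom_setf fsetUA fsetUid.
have NM1' : N \in domf M1' by rewrite dM1' fset1U1.
have Hf p : pivot (lookup M1' N) = Some p -> p < (\max_(x <- enum_fset c0) x).+2.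
  rewrite lookup_set eqxx => /pivotP [pc _].
  by rewrite ltnS leqW // (leq_bigmax_seq (F := id)).
have [R1 R2 R3 R4 R5] := red_loopP NM1' Hf.
have fsN : {in [fset x | x in fs], forall x, x < N} by move=> x; rewrite in_fset => /(allP Hfs).
split=> //.
- apply/andP; split; first by rewrite dM1'.
  by apply: sub_all R1 => M /eqP ->; rewrite dM1'.
- by rewrite R4.
- by move=> k kN; rewrite R2 // !lookup_set (negPf kN).
- apply/R3/rows_below_set; first exact: rows_below_set.
  by move=> x; rewrite in_fset /= lookup_set eqxx => /andP [/fsN].
Qed.

Lemma reduction_invS N st : reduction_inv N st -> reduction_inv N.+1 st.
Proof. by case=> cols rows red act; split=> // [k /cols /ltnW|]; last exact: rows_belowW rows. Qed.

Lemma reduction_inv_restrict N st (M : matrix) neg :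
  reduction_inv N st -> domf M `<=` domf (aM st) -> rows_below N M ->
  {in domf M, forall k, pivot (lookup M k) = pivot (lookup (aM st) k)} ->
  reduction_inv N (AState M (ainact st) neg).
Proof.
move=> [cols _ red act] sub rows piv; split=> //=.
- by move=> k /(fsubsetP sub) /cols.
- exact: reduced_sub red sub piv.
- by move=> k p kM; rewrite piv //; apply/act/(fsubsetP sub).
Qed.

Lemma reduced_extend (M M2 : matrix) N l :
  reduced M -> (forall k, k \in domf M -> k < N) -> domf M2 = N |` domf M ->
  (forall k, k != N -> lookup M2 k = lookup M k) ->
  reduced_at M2 N -> pivot (lookup M2 N) = Some l -> reduced M2.
Proof.
move=> [nz inj] cols dM2 same redN EN.
have kM k : k \in domf M2 -> k != N -> k \in domf M.
  by rewrite dM2 => /fset1UP [->|//]; rewrite eqxx.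
split=> [k kM2|k1 k2 k1M k2M /=].
  by case: (eqVneq k N) => [->|kN]; rewrite ?EN // same //; apply/nz/kM.
have off k : k \in domf M2 -> k != N -> pivot (lookup M2 k) != Some l.
  by move=> kM2 kN; apply: redN => //; apply/cols/kM.
case: (eqVneq k1 N) => [->|k1N]; case: (eqVneq k2 N) => [->|k2N] //.
- by rewrite EN => /esym/eqP; rewrite (negPf (off _ k2M k2N)).
- by rewrite EN => /eqP; rewrite (negPf (off _ k1M k1N)).
- by rewrite !same // => /inj; apply; apply: kM.
Qed.

Lemma process_last st e : aM (process st e).2 = last (aM st) (process st e).1.
Proof.
case: e => [j fs|l]; rewrite /process; last by case: ifP.
set tr2 := reduce_column _ j; clearbody tr2.
by case: pivot => [l|]; [case: ifP => _; rewrite /= ?last_cat | rewrite /= last_rcons].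
Qed.

Lemma process_additionP N st fs : reduction_inv N st -> all (gtn N) fs ->
  let res := process st (ADDITION N fs) in
  [/\ all (fun M : matrix => domf M `<=` N |` domf (aM st)) res.1,
      reduction_inv N.+1 res.2 & ainact res.2 = ainact st].
Proof.
move=> inv fsN; have [cols _ red act] := inv.
have [R1 R2 R3 R4 R5] := reduce_columnP inv fsN.
move: R1 R2 R3 R4 R5; rewrite /process.
set M1 := (aM st).[N <- _]; set tr2 := reduce_column _ N; set M2 := last M1 tr2.
move=> R1 R2 R3 R4 R5.
have tr2D : all (fun M : matrix => domf M `<=` N |` domf (aM st)) tr2.
  by apply: sub_all R1 => M /eqP ->.
clearbody M2 tr2.
have NM : N \notin domf (aM st) by apply/negP => /cols; rewrite ltnn.
have dM2N : domf M2 `\ N = domf (aM st) by rewrite R2 fsetU1K.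
have pivM2 k : k \in domf M2 `\ N -> pivot (lookup M2 k) = pivot (lookup (aM st) k).
  by rewrite in_fsetD1 => /andP [kN _]; rewrite R3.
case EP: (pivot (lookup M2 N)) => [l|] /=; last first.
  set M3 := M2.[~ N].
  have dM3 : domf M3 = domf (aM st) by rewrite domf_rem dM2N.
  have piv3 : {in domf M3, forall k, pivot (lookup M3 k) = pivot (lookup (aM st) k)}.
    move=> k; rewrite dM3 => kM; have kN : k != N by apply: contraTneq kM => ->.
    by rewrite lookup_rem (negPf kN) R3.
  have rows3 : rows_below N M3 by apply: rows_below_rem.
  clearbody M3; split; first by rewrite fsubset_refl all_rcons dM3 fsubsetU1.
    by apply/reduction_invS/reduction_inv_restrict; rewrite // dM3.
  by [].
have red2 : reduced M2 by apply: reduced_extend red cols R2 R3 R5 EP.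
case: ifP => linact /=; last first.
  split; [by rewrite fsubset_refl | split=> //= | by []].
  - by move=> k; rewrite R2 => /fset1UP [->//|/cols /ltnW].
  - exact: rows_belowW R4.
  - move=> k p kM2 Ek; case: (eqVneq k N) => [kN|kN].
      by move: Ek; rewrite kN EP => -[<-]; rewrite linact.
    have kD : k \in domf M2 `\ N by rewrite in_fsetD1 kN.
    by apply: (act k); [rewrite -dM2N | rewrite -pivM2].
have NM2 : N \in domf M2 by rewrite R2 fset1U1.
have [T1 [j [jM2 Ej dF pF] T3]] := remove_rowP red2 (ex_intro2 _ _ N NM2 EP).
have jN : j = N by case: red2 => _ /(_ _ _ jM2 NM2) /=; apply; rewrite Ej EP.
rewrite {j jM2 Ej}jN dM2N in dF; split=> //.
  rewrite fsubset_refl all_cat tr2D /=.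
  by apply: sub_all T1 => M /fsubset_trans; apply; rewrite -R2.
apply/reduction_invS/reduction_inv_restrict; rewrite ?dF ?fsubset_refl //; first exact: T3.
by move=> k kF; rewrite pF ?dF // pivM2 ?dM2N.
Qed.

Lemma process_inactiveP N st l : reduction_inv N st ->
  let res := process st (INACTIVE l) in
  [/\ all (fun M : matrix => domf M `<=` domf (aM st)) res.1,
      reduction_inv N res.2 & ainact res.2 = l :: ainact st].
Proof.
move=> Hinv; have [cols rows red act] := Hinv; rewrite /process.
case: hasP => [[j0 j0M /eqP Ej0]|nopiv] /=; last first.
  split=> //; split=> //= k p kM Ek; rewrite inE negb_or (act k) // andbT.
  by apply/eqP => pl; apply: nopiv; exists k; rewrite // Ek pl.
have [T1 [j [jM Ej dF pF]] T3] := remove_rowP red (ex_intro2 _ _ j0 j0M Ej0).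
split=> //; split=> /=.
- by move=> k; rewrite dF in_fsetD1 => /andP [_ /cols].
- exact: T3.
- by apply: reduced_sub red _ pF; rewrite dF fsubD1set.
- move=> k p kL Ek; have /andP [kj kM] : (k != j) && (k \in domf (aM st)) by rewrite -in_fsetD1 -dF.
  rewrite pF // in Ek; rewrite in_cons negb_or (act k) // andbT.
  by apply: contraNneq kj => pl; apply/eqP/(proj2 red) => //=; rewrite Ek Ej pl.
Qed.

Fixpoint well_indexed (N : nat) (s : seq elem) : Prop :=
  match s with
  | [::] => True
  | ADDITION j fs :: s' => [/\ j = N, all (gtn N) fs & well_indexed N.+1 s']
  | INACTIVE _ :: s' => well_indexed N s'
  end.

Definition is_addition (e : elem) : bool := if e is ADDITION _ _ then true else false.

Definition inactivated (s : seq elem) : seq nat :=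
  pmap (fun e => if e is INACTIVE l then Some l else None) s.

Definition final_state (st : astate) (s : seq elem) : astate :=
  foldl (fun st e => (process st e).2) st s.

Lemma run_from_cons st e s :
  run_from st (e :: s) = aM st :: (process st e).1 ++ run_from (process st e).2 s.
Proof. by rewrite /=; case: (process st e). Qed.

Lemma run_from_cat (P : pred matrix) st s1 s2 :
  all P (run_from st s1) -> all P (run_from (final_state st s1) s2) ->
  all P (run_from st (s1 ++ s2)).
Proof.
elim: s1 st => [|e s1 IH] st /=; first by case/andP.
case E: (process st e) => [tr st'] /=; rewrite !all_cat => /andP [-> /andP [-> H1]] H2 /=.
by apply: IH => //; rewrite /final_state /= E in H2.
Qed.

Lemma final_state_cat st s1 s2 :
  final_state st (s1 ++ s2) = final_state (final_state st s1) s2.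
Proof. exact: foldl_cat. Qed.

Lemma ncols_trace (D : {fset nat}) (M0 : matrix) tr :
  domf M0 `<=` D -> all (fun M : matrix => domf M `<=` D) tr ->
  all (fun M => ncols M <= #|` D|) tr /\ ncols (last M0 tr) <= #|` D|.
Proof.
move=> M0D trD; split; first by apply: sub_all trD => M /fsubset_leq_card.
by apply/fsubset_leq_card/(all_last (P := fun M : matrix => domf M `<=` D)).
Qed.

Lemma run_fromP s N st : reduction_inv N st -> well_indexed N s ->
  [/\ all (fun M => ncols M <= ncols (aM st) + count is_addition s) (run_from st s),
      reduction_inv (N + count is_addition s) (final_state st s),
      {subset ainact st <= ainact (final_state st s)} &
      {subset inactivated s <= ainact (final_state st s)}].
Proof.
elim: s N st => [|e s IH] N st inv wi; first by rewrite /= !addn0 leqnn; split.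
rewrite run_from_cons [final_state _ _]/=.
case: e wi => [j fs [-> fsN wi]|l wi].
- have [A1 A2 A3] := process_additionP inv fsN.
  have [trB finB] := ncols_trace (fsubsetU1 N (domf (aM st))) A1.
  rewrite -process_last in finB.
  move: (process st _) A2 A3 trB finB => [tr st'] /= A2 A3 trB finB.
  have card1 : #|` N |` domf (aM st)| <= ncols (aM st) + 1.
    by rewrite cardfsU1 addnC leq_add2l leq_b1.
  have [B1 B2 B3 B4] := IH _ _ A2 wi.
  rewrite leq_addr /= all_cat; split=> [||y|y] //.
  + apply/andP; split.
      apply: sub_all trB => M /leq_trans; apply; apply: leq_trans card1 _.
      by rewrite leq_add2l leq_addr.
    apply: sub_all B1 => M /leq_trans; apply; rewrite -addSnnS leq_add2r -addn1.
    exact: leq_trans finB card1.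
  + by rewrite -addSnnS.
  + by rewrite -A3 => /B3.
  + exact: B4.
- have [A1 A2 A3] := process_inactiveP l inv.
  have [trB finB] := ncols_trace (fsubset_refl (domf (aM st))) A1.
  rewrite -process_last in finB.
  move: (process st _) A2 A3 trB finB => [tr st'] /= A2 A3 trB finB.
  have [B1 B2 B3 B4] := IH _ _ A2 wi.
  rewrite leq_addr /= all_cat; split=> // [|y|y].
  + apply/andP; split; first by apply: sub_all trB => M /leq_trans; apply; rewrite leq_addr.
    by apply: sub_all B1 => M /leq_trans; apply; rewrite leq_add2r.
  + by move=> yin; apply: B3; rewrite A3 inE yin orbT.
  + by rewrite inE => /predU1P [->|/B4 //]; apply: B3; rewrite A3 inE eqxx.
Qed.

End Reduction.

(** * Active small coning *)

(* A vertex (x, j) of hat K is the copy of x created at step j; the stamp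
   bounds make the copies created at step i fresh. *)
Record coning_inv (i : nat) (st : cstate) : Prop := ConingInv {
  hat_face_closed : forall t t', t \in chat st -> t' `<=` t -> t' != fset0 -> t' \in chat st;
  active_hat_image : forall t, t \in chat st -> active (cact st) t ->
    exists2 s, s \in cK st & t = crho st @` s;
  image_in_hat : forall s, s \in cK st -> crho st @` s \in chat st;
  image_active : forall s, s \in cK st -> active (cact st) (crho st @` s);
  rho_inj : forall x y, is_vertex (cK st) x -> is_vertex (cK st) y ->
    crho st x = crho st y -> x = y;
  hat_stamp : forall t p, t \in chat st -> p \in t -> p.2 < i;
  active_stamp : forall p, p \in cact st -> p.2 < i;
  vertex_of_simplex : forall s x, s \in cK st -> x \in s -> is_vertex (cK st) x
}.

Lemma coning_inv0 : coning_inv 0 init_cstate.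
Proof. by split. Qed.

Lemma rho_vertex_active i st x :
  coning_inv i st -> is_vertex (cK st) x -> crho st x \in cact st.
Proof.
by move=> inv /(image_active inv) /fsubsetP; apply; rewrite imfset_fset1 fset11.
Qed.

Lemma rho_vertex_hat i st x :
  coning_inv i st -> is_vertex (cK st) x -> [fset crho st x] \in chat st.
Proof. by move=> inv /(image_in_hat inv); rewrite imfset_fset1. Qed.

Section Inclusion.
Variables (i : nat) (st : cstate) (s : tsimplex).
Hypothesis inv : coning_inv i st.
Hypothesis valid : op_valid (cK st) (Incl s).
Local Notation K := (cK st).
Local Notation rho := (crho st).
Local Notation st' := (cstep i st (Incl s)).

Lemma incl_rho_old x : is_vertex K x -> crho st' x = rho x.
Proof. by move=> xK /=; rewrite xK andbF. Qed.

Lemma incl_image_old s' : s' \in K -> crho st' @` s' = rho @` s'.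
Proof. by move=> s'K; apply/eq_in_imfset => x /(vertex_of_simplex inv s'K) /incl_rho_old. Qed.

Lemma incl_rho_new x : is_vertex (cK st') x -> ~~ is_vertex K x -> crho st' x = (x, i).
Proof.
have [_ [sK _]] := valid.
rewrite /is_vertex /= in_fsetU inE => /orP [->//|/eqP xs] _.
by rewrite -xs inE eqxx /= /is_vertex xs (negPf sK).
Qed.

Lemma incl_rho_stamp x : is_vertex (cK st') x -> (crho st' x).2 <= i.
Proof.
move=> xK'; case xK: (is_vertex K x); last by rewrite incl_rho_new ?xK.
by rewrite incl_rho_old //; apply/ltnW/(active_stamp inv)/(rho_vertex_active inv).
Qed.

Lemma incl_vertex x : x \in s -> is_vertex (cK st') x.
Proof.
have [_ [_ faces]] := valid.
move=> xs; rewrite /is_vertex /= in_fsetU inE; case: (eqVneq [fset x] s) => [->|ne].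
  by rewrite orbT.
by rewrite orbF faces // ?fproperEneq ?ne ?fsub1set //; apply/fset0Pn; exists x; rewrite inE.
Qed.

Lemma incl_face_closed t t' : t \in chat st' -> t' `<=` t -> t' != fset0 -> t' \in chat st'.
Proof.
have [_ [_ faces]] := valid.
rewrite /= !in_fsetU inE => /orP [tH t't t'0|/eqP -> t's t'0].
  by rewrite (hat_face_closed inv tH t't t'0).
pose s1 := [fset x in s | crho st' x \in t'].
have t'E : t' = crho st' @` s1.
  apply/fsetP => y; apply/idP/imfsetP => [yt|[x]]; last by rewrite inE => /andP [_ +] ->.
  have /imfsetP [x xs ey] := fsubsetP t's _ yt.
  by exists x; rewrite // inE; apply/andP; split; rewrite //= -ey.
case: (eqVneq s1 s) => [e|ne]; first by apply/orP; right; rewrite t'E e inE.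
have s1K : s1 \in K.
  apply: faces; first by rewrite fproperEneq ne; apply/fsubsetP => x; rewrite inE => /andP [].
  by apply: contraNneq t'0 => s10; rewrite t'E s10 imfset0.
by rewrite t'E incl_image_old // (image_in_hat inv s1K).
Qed.

Lemma incl_active_hat_image t : t \in chat st' -> active (cact st') t ->
  exists2 s', s' \in cK st' & t = crho st' @` s'.
Proof.
case/fsetUP => [tH act|/fset1P -> _]; last by exists s => //; apply/fsetUP; right; apply: fset11.
have actA : active (cact st) t.
  apply/fsubsetP => p pt; case/fsetUP: (fsubsetP act _ pt) => // /imfsetP [x _ pE].
  by have := hat_stamp inv tH pt; rewrite pE ltnn.
have [s' s'K ->] := active_hat_image inv tH actA.
by exists s'; [apply/fsetUP; left | rewrite incl_image_old].
Qed.

Lemma incl_image_in_hat s' : s' \in cK st' -> crho st' @` s' \in chat st'.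
Proof.
case/fsetUP => [s'K|/fset1P ->]; apply/fsetUP; last by right; apply: fset11.
by left; rewrite incl_image_old // (image_in_hat inv s'K).
Qed.

Lemma incl_image_active s' : s' \in cK st' -> active (cact st') (crho st' @` s').
Proof.
case/fsetUP => [s'K|/fset1P ->].
  by rewrite incl_image_old //; apply: fsubset_trans (image_active inv s'K) (fsubsetUl _ _).
apply/fsubsetP => p /imfsetP [x xs ->]; apply/fsetUP.
case xK: (is_vertex K x); first by rewrite incl_rho_old //; left; apply: (rho_vertex_active inv xK).
by rewrite incl_rho_new ?incl_vertex ?xK //; right; apply/imfsetP; exists x; rewrite //= inE xs xK.
Qed.

Lemma incl_rho_inj x y : is_vertex (cK st') x -> is_vertex (cK st') y ->
  crho st' x = crho st' y -> x = y.
Proof.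
move=> xK' yK'; case xK: (is_vertex K x); case yK: (is_vertex K y).
- by rewrite !incl_rho_old //; apply: (rho_inj inv).
- rewrite incl_rho_old // incl_rho_new ?yK // => e.
  by have := active_stamp inv (rho_vertex_active inv xK); rewrite e ltnn.
- rewrite (incl_rho_old yK) incl_rho_new ?xK // => e.
  by have := active_stamp inv (rho_vertex_active inv yK); rewrite -e ltnn.
- by rewrite !incl_rho_new ?xK ?yK // => -[].
Qed.

Lemma incl_coning_inv : coning_inv i.+1 st'.
Proof.
split.
- exact: incl_face_closed.
- exact: incl_active_hat_image.
- exact: incl_image_in_hat.
- exact: incl_image_active.
- exact: incl_rho_inj.
- move=> t p /fsetUP [tH pt|/fset1P -> /imfsetP [x xs ->]].
    exact/ltnW/(hat_stamp inv tH pt).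
  by rewrite ltnS incl_rho_stamp ?incl_vertex.
- by move=> p /fsetUP [/(active_stamp inv) /ltnW|/imfsetP [x _ ->]].
- move=> s' x /fsetUP [s'K xs'|/fset1P -> /incl_vertex //].
  by apply/fsetUP; left; exact: (vertex_of_simplex inv s'K xs').
Qed.

End Inclusion.

Lemma in_act_star (H : {fset hsimplex}) (A : {fset hvert}) w t :
  reflect ([/\ t \in H, active A t & exists2 s, s \in H & (w \in s) && (t `<=` s)])
          (t \in act_star H A w).
Proof.
rewrite /act_star inE /=; apply: (iffP and3P) => [[tH ta /hasP [s sH ws]]|[tH ta [s sH ws]]].
  by split=> //; exists s.
by split=> //; apply/hasP; exists s.
Qed.

Lemma replace_notin (T : choiceType) (c d : T) (X : {fset T}) :
  c \notin X -> [fset (if q == c then d else q) | q in X] = X.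
Proof.
move=> cX; rewrite -[RHS]imfset_id; apply: eq_in_imfset => q qX /=.
by case: eqP => // qc; rewrite -qc qX in cX.
Qed.

Lemma replace_in (T : choiceType) (c d : T) (X : {fset T}) :
  c \in X -> [fset (if q == c then d else q) | q in X] = d |` (X `\ c).
Proof.
move=> cX; apply/fsetP => p; rewrite in_fset1U in_fsetD1.
apply/imfsetP/idP => [[q qX ->]|].
  by case: (eqVneq q c) => [_|qc]; rewrite ?eqxx //= qc qX orbT.
case/orP => [/eqP ->|/andP [pc pX]]; first by exists c; rewrite ?eqxx.
by exists p; rewrite // (negPf pc).
Qed.

(* c is the copy that becomes inactive and d the apex of the cone over its
   active star; both branches of cstep on a contraction are instances. *)
Section Contraction.
Variables (i : nat) (st : cstate) (u v : nat) (c d : hvert) (rho' : nat -> hvert).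
Hypothesis inv : coning_inv i st.
Hypotheses (uv : u != v) (uK : is_vertex (cK st) u) (vK : is_vertex (cK st) v).
Hypothesis cd_rho : (c = crho st u /\ d = crho st v) \/ (c = crho st v /\ d = crho st u).
Hypothesis rho'E : forall x, rho' x = if x == u then d else crho st x.
Local Notation K := (cK st).
Local Notation H := (chat st).
Local Notation A := (cact st).
Local Notation rho := (crho st).
Local Notation cone := [fset d |` t | t in act_star H A c].
Local Notation st' := (CState [fset contr_simplex u v t | t in K] (H `|` cone) (A `\ c) rho').
Let sig (q : hvert) := if q == c then d else q.

Lemma contr_cd : c != d.
Proof.
have ruv : rho u != rho v by apply: contra uv => /eqP /(rho_inj inv uK vK) ->.
by case: cd_rho => -[-> ->] //; rewrite eq_sym.
Qed.

Lemma contr_c_active : c \in A.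
Proof. by case: cd_rho => -[-> _]; apply: (rho_vertex_active inv). Qed.

Lemma contr_d_active : d \in A.
Proof. by case: cd_rho => -[_ ->]; apply: (rho_vertex_active inv). Qed.

Lemma contr_d_hat : [fset d] \in H.
Proof. by case: cd_rho => -[_ ->]; apply: (rho_vertex_hat inv). Qed.

Lemma contr_preimage_cd x : is_vertex K x -> (rho x == c) || (rho x == d) -> contr_map u v x = u.
Proof.
move=> xK rxcd; suff : (x == u) || (x == v).
  by case/orP => /eqP ->; rewrite /contr_map ?eqxx // (negPf uv).
have inj_u := rho_inj inv xK uK; have inj_v := rho_inj inv xK vK.
case: cd_rho rxcd => -[-> ->] /orP [] /eqP;
  [move/inj_u | move/inj_v | move/inj_v | move/inj_u]; by move=> ->; rewrite eqxx ?orbT.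
Qed.

Lemma contr_rho x : is_vertex K x -> rho' (contr_map u v x) = sig (rho x).
Proof.
move=> xK; rewrite rho'E /sig; case: (eqVneq (contr_map u v x) u) => [xu|xu].
  suff : (rho x == c) || (rho x == d) by case/orP => /eqP ->; rewrite ?eqxx //; case: ifP.
  move: xu; rewrite /contr_map; case: eqP => [-> _|_ ->];
    by case: cd_rho => -[-> ->]; rewrite eqxx ?orbT.
have -> : contr_map u v x = x by move: xu; rewrite /contr_map; case: (x == v); rewrite ?eqxx.
by case: eqP => // e; case/negP: xu; rewrite contr_preimage_cd ?e ?eqxx.
Qed.

Lemma contr_image s : s \in K -> rho' @` contr_simplex u v s = sig @` (rho @` s).
Proof.
move=> sK; rewrite /contr_simplex -!imfset_comp; apply: eq_in_imfset => x xs /=.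
exact/contr_rho/(vertex_of_simplex inv sK).
Qed.

Lemma contr_vertex x' : is_vertex (cK st') x' -> exists2 x, is_vertex K x & x' = contr_map u v x.
Proof.
move=> /imfsetP [s sK e]; have : x' \in contr_simplex u v s by rewrite -e fset11.
by case/imfsetP => x xs ->; exists x => //; exact: (vertex_of_simplex inv sK xs).
Qed.

Lemma contr_face_closed t t' : t \in chat st' -> t' `<=` t -> t' != fset0 -> t' \in chat st'.
Proof.
rewrite /= !in_fsetU => /orP [tH t't t'0|]; first by rewrite (hat_face_closed inv tH t't t'0).
case/imfsetP => tau /in_act_star [tauH taua [s sH /andP [cs taus]]] -> t't t'0.
have subtau : t' `\ d `<=` tau by rewrite fsubDset.
case: (boolP (d \in t')) => dt'; last first.
  have t'E : t' `\ d = t' by apply/fsetDidPl; rewrite fdisjointX1.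
  by rewrite -t'E (hat_face_closed inv tauH subtau) // t'E.
case: (eqVneq (t' `\ d) fset0) => [e|ne].
  by rewrite -(fsetD1K dt') e fsetU0 contr_d_hat.
apply/orP; right; rewrite -(fsetD1K dt'); apply/imfsetP; exists (t' `\ d) => //.
apply/in_act_star; split; first exact: (hat_face_closed inv tauH subtau ne).
  exact: fsubset_trans subtau taua.
by exists s; rewrite // cs (fsubset_trans subtau taus).
Qed.

Lemma contr_active_hat_image t : t \in chat st' -> active (cact st') t ->
  exists2 s', s' \in cK st' & t = rho' @` s'.
Proof.
case/fsetUP => [tH|/imfsetP [tau /in_act_star [tauH taua [s sH /andP [cs taus]]] ->]];
  move/fsubsetD1P => [ta ct].
  have [s sK tE] := active_hat_image inv tH ta; rewrite tE in ct *.
  by exists (contr_simplex u v s); rewrite ?in_imfset // contr_image // replace_notin.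
have ctau : c \notin tau by apply: contra ct => /fset1Ur.
have ctH : c |` tau \in H.
  apply: (hat_face_closed inv sH); rewrite ?fsubUset ?fsub1set ?cs ?taus //.
  by rewrite -cardfs_gt0 cardfsU1 ctau.
have cta : active A (c |` tau) by rewrite /active fsubUset fsub1set contr_c_active.
have [s1 s1K e1] := active_hat_image inv ctH cta.
exists (contr_simplex u v s1); first by apply/imfsetP; exists s1.
by rewrite contr_image // -e1 replace_in ?fset1U1 // fsetU1K.
Qed.

Lemma contr_image_hat s' : s' \in cK st' ->
  (rho' @` s' \in chat st') && active (cact st') (rho' @` s').
Proof.
case/imfsetP => s sK ->; rewrite contr_image //.
have TH := image_in_hat inv sK; have Ta := image_active inv sK.
case: (boolP (c \in rho @` s)) => cT; rewrite /sig; last first.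
  by rewrite replace_notin //; apply/andP; split; [apply/fsetUP; left | apply/fsubsetD1P].
rewrite replace_in //; apply/andP; split; last first.
  apply/fsubsetD1P; split; last by rewrite in_fset1U negb_or contr_cd in_fsetD1 eqxx.
  by rewrite fsubUset fsub1set contr_d_active (fsubset_trans (fsubD1set _ _) Ta).
apply/fsetUP; case: (eqVneq ((rho @` s) `\ c) fset0) => [e|ne].
  by left; rewrite e fsetU0 contr_d_hat.
right; apply/imfsetP; exists ((rho @` s) `\ c) => //; apply/in_act_star; split.
- exact: (hat_face_closed inv TH (fsubD1set _ _) ne).
- exact: fsubset_trans (fsubD1set _ _) Ta.
- by exists (rho @` s); rewrite // cT fsubD1set.
Qed.

Lemma contr_rho_inj x' y' : is_vertex (cK st') x' -> is_vertex (cK st') y' ->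
  rho' x' = rho' y' -> x' = y'.
Proof.
move=> /contr_vertex [x xK ->] /contr_vertex [y yK ->]; rewrite !contr_rho // /sig.
case: (eqVneq (rho x) c) => [ex|nx]; case: (eqVneq (rho y) c) => [ey|ny] e.
- by rewrite (rho_inj inv xK yK) // ex ey.
- by rewrite !contr_preimage_cd // ?ex ?eqxx // -e eqxx orbT.
- by rewrite !contr_preimage_cd // ?ey ?eqxx // e eqxx orbT.
- by rewrite (rho_inj inv xK yK e).
Qed.

Lemma cone_coning_inv : coning_inv i.+1 st'.
Proof.
split.
- exact: contr_face_closed.
- exact: contr_active_hat_image.
- by move=> s' /contr_image_hat /andP [].
- by move=> s' /contr_image_hat /andP [].
- exact: contr_rho_inj.
- move=> t p /fsetUP [tH pt|/imfsetP [tau /in_act_star [tauH _ _] ->] /fset1UP [->|pt]].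
  + exact/ltnW/(hat_stamp inv tH pt).
  + exact/ltnW/(active_stamp inv contr_d_active).
  + exact/ltnW/(hat_stamp inv tauH pt).
- by move=> p /fsetD1P [_ /(active_stamp inv) /ltnW].
- move=> _ _ /imfsetP [s sK ->] /imfsetP [y ys ->]; apply/imfsetP; exists [fset y].
    exact: (vertex_of_simplex inv sK ys).
  by rewrite /contr_simplex imfset_fset1.
Qed.

End Contraction.

Lemma cstep_coning_inv i st o : coning_inv i st -> op_valid (cK st) o ->
  coning_inv i.+1 (cstep i st o).
Proof.
case: o => [s|u v] inv; first exact: incl_coning_inv.
case=> uv [uK vK]; rewrite /cstep; case: ifP => _.
  by apply: cone_coning_inv => //; left.
by apply: cone_coning_inv => //; right.
Qed.

(** * Counting columns along the stream *)

Lemma state_at0 ops : state_at ops 0 = init_cstate.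
Proof. by case: ops. Qed.

Lemma nth_states_from ops n st k : k < size ops ->
  nth init_cstate (states_from n st ops) k.+1 =
  cstep (n + k) (nth init_cstate (states_from n st ops) k) (nth (Incl fset0) ops k).
Proof.
elim: ops n st k => [|o os IH] n st [|k] //=; first by rewrite addn0; case: os {IH}.
by rewrite ltnS => kl; rewrite IH // addnS.
Qed.

Lemma state_atS ops k : k < size ops ->
  state_at ops k.+1 = cstep k (state_at ops k) (nth (Incl fset0) ops k).
Proof. exact: nth_states_from. Qed.

Lemma coning_inv_state_at ops i : valid_tower ops -> i <= size ops ->
  coning_inv i (state_at ops i).
Proof.
move=> valid; elim: i => [|i IH] lei; first by rewrite state_at0; apply: coning_inv0.
by rewrite state_atS //; apply: cstep_coning_inv; [apply/IH/ltnW | apply: valid].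
Qed.

Definition active_part (S : cstate) : {fset hsimplex} := [fset t in chat S | active (cact S) t].

Lemma card_active_part i S : coning_inv i S -> #|` active_part S| <= #|` cK S|.
Proof.
move=> inv; have sub : active_part S `<=` [fset crho S @` (s : tsimplex) | s in cK S].
  apply/fsubsetP => t; rewrite inE /= => /andP [tH ta].
  by have [s sK ->] := active_hat_image inv tH ta; apply/imfsetP; exists s.
by apply: leq_trans (fsubset_leq_card sub) _; apply: leq_imfset_card.
Qed.

Lemma act_star_sub S w : act_star (chat S) (cact S) w `<=` active_part S.
Proof. by apply/fsubsetP => t /in_act_star [tH ta _]; rewrite inE; apply/andP. Qed.

Lemma card_fsetUDl (T : choiceType) (A B : {fset T}) : #|` (A `|` B) `\` A| <= #|` B|.
Proof. by apply: fsubset_leq_card; rewrite fsubDset fsubset_refl. Qed.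

Lemma card_new_simplices i S o : coning_inv i S -> op_valid (cK S) o ->
  #|` chat (cstep i S o) `\` chat S| <= maxn #|` cK S| #|` cK (cstep i S o)|.
Proof.
move=> inv valid; case: o valid => [s|u v] _ /=.
  apply: leq_trans (card_fsetUDl _ _) _; rewrite cardfs1 leq_max; apply/orP; right.
  by rewrite cardfs_gt0; apply/fset0Pn; exists s; rewrite in_fsetU fset11 orbT.
have cone_card w (d : hvert) : #|` [fset d |` t | t in act_star (chat S) (cact S) w]| <= #|` cK S|.
  apply: leq_trans (leq_imfset_card _ _ _) _; apply: leq_trans (card_active_part inv).
  exact/fsubset_leq_card/act_star_sub.
by case: ifP => _ /=; apply: leq_trans (card_fsetUDl _ _) _; rewrite leq_max cone_card.
Qed.

Lemma card_le_width ops i : i <= size ops -> #|` cK (state_at ops i)| <= width ops.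
Proof.
move=> lei; pose j : 'I_(size ops).+1 := Ordinal (n := (size ops).+1) (m := i) lei.
by have := @leq_bigmax_cond _ (fun _ => true) (fun k : 'I__ => #|` cK (state_at ops k)|) j isT.
Qed.

Definition additions (bs : seq (seq hsimplex * seq hsimplex)) : seq hsimplex :=
  flatten (map fst bs).

Definition block_stream (ad : seq hsimplex) (p : seq hsimplex * seq hsimplex) : seq elem :=
  [seq ADDITION (index s ad) [seq index f ad | f <- facets s] | s <- p.1] ++
  [seq INACTIVE (index s ad) | s <- p.2].

Lemma block_streamP ad (N : nat) (p : seq hsimplex * seq hsimplex) :
  (forall m, m < size p.1 -> index (nth fset0 p.1 m) ad = (N + m)%N /\
     all (fun f => index f ad < N + m) (facets (nth fset0 p.1 m))) ->
  [/\ well_indexed N (block_stream ad p),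
      count is_addition (block_stream ad p) = size p.1 &
      inactivated (block_stream ad p) = [seq index s ad | s <- p.2]].
Proof.
case: p => adds inacts /=; rewrite /block_stream /=.
elim: adds N => [|s adds IH] N idx /=.
  by split; elim: inacts => //= s inacts ->.
have [idx0 facets0] := idx 0 isT; rewrite addn0 in idx0 facets0.
have idx' m : m < size adds -> index (nth fset0 adds m) ad = (N.+1 + m)%N /\
    all (fun f => index f ad < N.+1 + m) (facets (nth fset0 adds m)).
  by move=> lt; rewrite addSnnS; apply: (idx m.+1).
have [wi cnt inact] := IH N.+1 idx'.
split=> //=; last by rewrite cnt.
by split=> //; rewrite all_map; apply: sub_all facets0 => f.
Qed.

Lemma ncols_le_active_part N st (ad : seq hsimplex) (S : cstate) :
  reduction_inv N st -> uniq ad -> N <= size ad ->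
  (forall l, l < N -> nth fset0 ad l \in chat S) ->
  (forall t, t \in chat S -> ~~ active (cact S) t -> index t ad \in ainact st) ->
  ncols (aM st) <= #|` active_part S|.
Proof.
move=> [_ rows [nz inj] act] uad Nad inS inactS.
set M := aM st; pose g k := nth fset0 ad (odflt 0 (pivot (lookup M k))).
have pivN k : k \in domf M -> exists2 p, pivot (lookup M k) = Some p & p < N.
  move=> kM; case E: (pivot (lookup M k)) => [p|]; last by have := nz k kM; rewrite E.
  by exists p => //; apply: rows (proj1 (proj1 (pivotP _ _) E)).
have g_inj : {in domf M &, injective g}.
  move=> k1 k2 k1M k2M; have [p1 E1 l1] := pivN _ k1M; have [p2 E2 l2] := pivN _ k2M.
  rewrite /g E1 E2 /= => /eqP; rewrite nth_uniq ?(leq_trans l1) ?(leq_trans l2) // => /eqP p12.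
  by apply: inj; rewrite //= E1 E2 p12.
have sub : g @` domf M `<=` active_part S.
  apply/fsubsetP => t /imfsetP [k kM ->]; have [p E lt] := pivN _ kM.
  rewrite inE /g E /=; apply/andP; split; first exact: inS.
  apply/negPn/negP => na; have := inactS _ (inS _ lt) na.
  by rewrite index_uniq ?(leq_trans lt) // (negPf (act _ _ kM E)).
have card_g : #|` g @` domf M| = #|` domf M| by apply/eqP/card_in_imfsetP.
by rewrite /ncols -card_g; apply: fsubset_leq_card.
Qed.

Lemma facetP (s f : hsimplex) : f \in facets s -> [/\ f `<=` s, f != fset0 & #|` f| < #|` s|].
Proof.
rewrite /facets; case: ifP => // gt1 /mapP [x xs ->].
have cs : #|` s| = #|` s `\ x|.+1 by rewrite (cardfsD1 x s) xs.
split; first exact: fsubD1set.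
  by rewrite -cardfs_gt0 -ltnS -cs.
by rewrite cs.
Qed.

Lemma chat_state_atS ops i : i < size ops ->
  chat (state_at ops i) `<=` chat (state_at ops i.+1).
Proof.
move=> lti; rewrite state_atS //; case: (nth _ ops i) => [s|u v] /=; first exact: fsubsetUl.
by case: ifP => _; apply: fsubsetUl.
Qed.

Lemma flatten_map_takeS (T U : Type) (f : T -> seq U) (s : seq T) x0 i : i < size s ->
  flatten (map f (take i.+1 s)) = flatten (map f (take i s)) ++ f (nth x0 s i).
Proof. by move=> lti; rewrite (take_nth x0 lti) -cats1 map_cat flatten_cat /= cats0. Qed.

Lemma perm_additions_take ops bs : coning_blocks ops bs -> forall i, i <= size ops ->
  perm_eq (additions (take i bs)) (enum_fset (chat (state_at ops i))).
Proof.
move=> [sz blocks]; elim=> [|i IH] lei; first by rewrite take0 state_at0.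
have [perm_new _ _] := blocks i lei.
rewrite /additions (@flatten_map_takeS _ _ _ _ ([::], [::])) ?sz //.
apply: perm_trans (perm_cat (IH (ltnW lei)) perm_new) _.
apply: uniq_perm; rewrite ?fset_uniq //.
  rewrite cat_uniq !fset_uniq /= andbT; apply/hasPn => x; rewrite in_fsetD.
  by case/andP.
move=> x; rewrite mem_cat in_fsetD; have /fsubsetP sub := chat_state_atS lei.
apply/orP/idP => [[/sub|/andP [_ ->]] //|xS'].
by case xS: (x \in chat (state_at ops i)); [left | right].
Qed.

Lemma uniq_additions ops bs : coning_blocks ops bs -> uniq (additions bs).
Proof.
move=> blocks; have := perm_additions_take blocks (leqnn _).
by case: blocks => sz _; rewrite -sz take_size => /perm_uniq ->; apply: fset_uniq.
Qed.

Lemma block_indices ops bs i : valid_tower ops -> coning_blocks ops bs -> i < size ops ->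
  let P := additions (take i bs) in let B := (nth ([::], [::]) bs i).1 in
  forall m, m < size B ->
    index (nth fset0 B m) (additions bs) = (size P + m)%N /\
    all (fun f => index f (additions bs) < size P + m) (facets (nth fset0 B m)).
Proof.
move=> valid blocks lti P B; have [sz blockP] := blocks.
have [perm_new sortedB _] := blockP i lti; rewrite -/B in perm_new sortedB.
set S := state_at ops i in perm_new; set S' := state_at ops i.+1 in perm_new.
have ltb : i < size bs by rewrite sz.
have permP : perm_eq P (enum_fset (chat S)) := perm_additions_take blocks (ltnW lti).
have permPB : perm_eq (P ++ B) (enum_fset (chat S')).
  by rewrite /P -(@flatten_map_takeS _ _ _ _ ([::], [::])) //; apply: perm_additions_take.
have adE : additions bs = P ++ B ++ additions (drop i.+1 bs).
  rewrite catA /P /B -(@flatten_map_takeS _ _ _ _ ([::], [::])) //.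
  by rewrite -flatten_cat -map_cat cat_take_drop.
have uPB : uniq (P ++ B) by rewrite (perm_uniq permPB) fset_uniq.
have uB : uniq B by move: uPB; rewrite cat_uniq => /and3P [].
have idxB t : t \in B -> index t (additions bs) = (size P + index t B)%N.
  move=> tB; have : t \notin P.
    by rewrite (perm_mem permP); move: tB; rewrite (perm_mem perm_new) in_fsetD => /andP [].
  by rewrite adE index_cat => /negPf ->; rewrite index_cat tB.
have idxP t : t \in P -> index t (additions bs) < size P.
  by move=> tP; rewrite adE index_cat tP index_mem.
move=> m ltm; set s := nth fset0 B m; have sB : s \in B by apply: mem_nth.
split; first by rewrite idxB // index_uniq.
apply/allP => f /facetP [fs f0 fsz].
have sS' : s \in chat S' by move: sB; rewrite (perm_mem perm_new) in_fsetD => /andP [].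
have := hat_face_closed (coning_inv_state_at valid lti) sS' fs f0.
rewrite -(perm_mem permPB) mem_cat => /orP [/idxP fP|fB]; first exact: leq_trans fP (leq_addr _ _).
rewrite idxB // ltn_add2l ltnNge; apply/negP => lemf.
have card_trans : transitive (fun s t : hsimplex => #|` s| <= #|` t|).
  by move=> ? ? ? /leq_trans; apply.
have mB : m \in [pred n | n < size B] := ltm.
have fB' : index f B \in [pred n | n < size B] by rewrite inE index_mem.
have := sorted_leq_nth card_trans (fun _ => leqnn _) fset0 sortedB m (index f B) mB fB' lemf.
by rewrite nth_index // -/s leqNgt fsz.
Qed.

Lemma ncols_le_width ops bs i st : valid_tower ops -> coning_blocks ops bs -> i <= size ops ->
  reduction_inv (size (additions (take i bs))) st ->
  (forall t, t \in chat (state_at ops i) -> ~~ active (cact (state_at ops i)) t ->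
     index t (additions bs) \in ainact st) ->
  ncols (aM st) <= width ops.
Proof.
move=> valid blocks lei inv inactive; have invS := coning_inv_state_at valid lei.
apply: leq_trans (card_le_width lei); apply: leq_trans (card_active_part invS).
have adE : additions bs = additions (take i bs) ++ additions (drop i bs).
  by rewrite /additions -flatten_cat -map_cat cat_take_drop.
apply: (ncols_le_active_part inv (uniq_additions blocks)) => // [|l ltl].
  by rewrite adE size_cat leq_addr.
by rewrite adE nth_cat ltl -(perm_mem (perm_additions_take blocks lei)) mem_nth.
Qed.

Lemma size_block_le_width ops bs i : valid_tower ops -> coning_blocks ops bs -> i < size ops ->
  size (nth ([::], [::]) bs i).1 <= width ops.
Proof.
move=> valid [_ blockP] lti; have [perm_new _ _] := blockP i lti.
rewrite (perm_size perm_new) state_atS //.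
apply: leq_trans (card_new_simplices (coning_inv_state_at valid (ltnW lti)) (valid i lti)) _.
by rewrite -state_atS // geq_max !card_le_width // ltnW.
Qed.

Definition init_astate : astate := AState [fmap]%fmap [::] [::].

Lemma reduction_inv0 : reduction_inv 0 init_astate.
Proof. by split=> // k x; rewrite /lookup /= fnd_fmap0 inE. Qed.

Definition stream_prefix bs i : seq elem :=
  flatten (map (block_stream (additions bs)) (take i bs)).

Lemma to_stream_prefix bs : to_stream bs = stream_prefix bs (size bs).
Proof. by rewrite /stream_prefix take_size. Qed.

Lemma stream_prefix_inv ops bs : valid_tower ops -> coning_blocks ops bs ->
  forall i, i <= size ops ->
  [/\ all (fun M => ncols M <= 2 * width ops) (run_from init_astate (stream_prefix bs i)),
      reduction_inv (size (additions (take i bs))) (final_state init_astate (stream_prefix bs i)) &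
      forall t, t \in chat (state_at ops i) -> ~~ active (cact (state_at ops i)) t ->
        index t (additions bs) \in ainact (final_state init_astate (stream_prefix bs i))].
Proof.
move=> valid blocks; have [sz blockP] := blocks.
elim=> [|i IH] lei.
  by rewrite /stream_prefix take0 state_at0; split=> //; apply: reduction_inv0.
have lti : i < size ops by []; have ltb : i < size bs by rewrite sz.
have [G1 G2 G3] := IH (ltnW lei).
set P := additions (take i bs) in G2 *; set ab := nth ([::], [::]) bs i.
set st := final_state _ _ in G2 G3.
set S := state_at ops i in G3; set S' := state_at ops i.+1.
have [_ _ perm_inact] := blockP i lti; rewrite -/ab -/S -/S' in perm_inact.
have [B1 B2 B3] := block_streamP (block_indices valid blocks lti).
have [R1 R2 R3 R4] := run_fromP G2 B1; rewrite B2 -/ab in R1 R2.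
rewrite /stream_prefix (@flatten_map_takeS _ _ _ _ ([::], [::])) // -/ab final_state_cat -/st.
rewrite /additions (@flatten_map_takeS _ _ _ _ ([::], [::])) // -/ab -/P size_cat.
split=> //.
- apply: run_from_cat => //; apply: sub_all R1 => M /leq_trans; apply.
  rewrite mul2n -addnn leq_add ?(size_block_le_width valid blocks lti) //.
  exact: ncols_le_width valid blocks (ltnW lei) G2 G3.
- move=> t tS' tna; case: (boolP (t \in newly_inactive S S')) => tni.
    by apply: R4; rewrite B3; apply/mapP; exists t; rewrite // (perm_mem perm_inact).
  have tS : t \in chat S by apply: contraNT tni => tS; rewrite !inE /= tS' tna tS.
  have ta : ~~ active (cact S) t by apply: contraNN tni => ta; rewrite !inE /= tS' tna ta orbT.
  exact/R3/G3.
Qed.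

Theorem lemma19 (ops : seq top) (bs : seq (seq hsimplex * seq hsimplex)) :
  valid_tower ops ->
  coning_blocks ops bs ->
  all (fun M => ncols M <= 2 * width ops) (alg_trace (to_stream bs)).
Proof.
move=> valid blocks; have [trace _ _] := stream_prefix_inv valid blocks (leqnn _).
by case: blocks trace => sz _; rewrite /alg_trace to_stream_prefix sz.
Qed.
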